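(* There is a sentence $\psi$ of $\mathbb L^1_{\le\aleph_1}$ (in some vocabulary) such that for every infinite cardinal $\lambda$: $\psi$ has a model of cardinality $\lambda$ iff $\lambda\nrightarrow(\aleph_1)^{<\omega}_2$.
   Context: $\lambda\to(\aleph_1)^{<\omega}_2$ means: for every function $c$ from the finite subsets of $\lambda$ to $\{0,1\}$ there is $X\subseteq\lambda$ of cardinality $\aleph_1$ such that for each $n<\omega$, $c$ is constant on the $n$-element subsets of $X$; $\lambda\nrightarrow(\aleph_1)^{<\omega}_2$ is its negation. The game $\Game_{\Gamma,\theta,\alpha}[M_1,M_2]$: states are tuples $(A^1,A^2,h^1,h^2,g,\beta,n)$ with $A^\ell\subseteq M_\ell$, $|A^\ell|\le\theta$, $\beta\le\alpha$, $n<\omega$, $h^\ell:A^\ell\to\omega$, $g$ a partial injection $M_1\to M_2$ with $g^1=g,g^2=g^{-1}$, $\mathrm{Dom}(g^\ell)\subseteq A^\ell$, $g$ preserving every formula of $\Gamma$, and $h^\ell(a)<n$ on $\mathrm{Dom}(g^\ell)$. Start: $(\emptyset,\emptyset,\emptyset,\emptyset,\emptyset,\alpha,0)$. At state $\mathbf s_n$, AIS picks $\iota\in\{1,2\}$, $\beta_{n+1}<\beta_n$, $A'$ with $A^\iota_n\subseteq A'\subseteq M_\iota$, $|A'|\le\theta$; ISO picks a state $\mathbf s_{n+1}$ with index $n+1$ and ordinal $\beta_{n+1}$ extending $\mathbf s_n$ coordinatewise, with $A^\iota_{n+1}=A'$, $A^{3-\iota}_{n+1}=A^{3-\iota}_n\cup\mathrm{Dom}(g^{3-\iota}_{n+1})$,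 $h^\iota_{n+1}(a)\ge n+1$ for new $a\in A'$, and $\mathrm{Dom}(g^\iota_{n+1})=\{a\in A^\iota_n:h^\iota_n(a)<n+1\}$. A player without legal move loses; for $\alpha=0$ ISO wins iff the start is a state. $\mathscr E^0$: ISO has a winning strategy; $\mathscr E^1$: equivalence relation generated by $\mathscr E^0$; $\mathrm{qf}(\tau)$: atomic formulas and negations. $\mathbb L^1_{\le\theta}$: a sentence of $\mathbb L^1_{\le\theta}(\tau)$ is given by $\tau_1\subseteq\tau$, $|\tau_1|\le\theta$, $\alpha<\theta^+$ and at most $\beth_{\alpha+1}(\theta)$ $\tau_1$-models $M_i$; $M\models\psi$ iff $M\restriction\tau_1\,\mathscr E^1_{\mathrm{qf}(\tau_1),\theta,\alpha}\,M_i$ for some $i$. *)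

From mathcomp Require Import all_boot.
From Stdlib Require List Permutation Relations.

Set Implicit Arguments.
Unset Strict Implicit.
Unset Printing Implicit Defensive.

Definition injects (X Y : Type) : Prop := exists f : X -> Y, injective f.
Definition equipotent (X Y : Type) : Prop := exists f : X -> Y, bijective f.

Definition countable_type (X : Type) : Prop := injects X nat.

Definition strict_well_order (W : Type) (lt : W -> W -> Prop) : Prop :=
  (forall x y z, lt x y -> lt y z -> lt x z) /\
  (forall x y, lt x y \/ x = y \/ lt y x) /\
  well_founded lt.

(* |X| <= aleph_1, i.e. X injects into omega_1: X carries a well-order all
   of whose proper initial segments are countable (order type <= omega_1). *)
Definition le_aleph1 (X : Type) : Prop :=
  exists lt : X -> X -> Prop, strict_well_order lt /\
    forall x, countable_type {y : X | lt y x}.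

Definition eq_aleph1 (X : Type) : Prop := le_aleph1 X /\ ~ countable_type X.

Definition infinite_type (L : Type) : Prop := forall n : nat, ~ injects L 'I_n.

(* A colouring of the finite subsets of L is a colouring of duplicate-  *)
(* free lists invariant under permutation.                              *)

Definition arrows_aleph1_fin (L : Type) : Prop :=
  forall c : list L -> bool,
    (forall l l' : list L, List.NoDup l -> Permutation.Permutation l l' -> c l = c l') ->
    exists X : L -> Prop, eq_aleph1 {x : L | X x} /\
      forall (n : nat) (l l' : list L),
        List.NoDup l -> List.NoDup l' -> List.length l = n -> List.length l' = n ->
        (forall x, List.In x l -> X x) -> (forall x, List.In x l' -> X x) ->
        c l = c l'.

Record vocab : Type := Vocab {
  rsym : Type; rar : rsym -> nat;
  fsym : Type; far : fsym -> nat }.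

Record structure (tau : vocab) : Type := Structure {
  carrier : Type;
  carrier_inh : inhabited carrier;
  rint : forall r : rsym tau, ('I_(rar r) -> carrier) -> Prop;
  fint : forall f : fsym tau, ('I_(far f) -> carrier) -> carrier }.

Definition subvocab (tau : vocab) (Pr : rsym tau -> Prop) (Pf : fsym tau -> Prop)
  : vocab :=
  {| rsym := {r : rsym tau | Pr r}; rar := fun r => rar (proj1_sig r);
     fsym := {f : fsym tau | Pf f}; far := fun f => far (proj1_sig f) |}.

Definition restrict (tau : vocab) (Pr : rsym tau -> Prop) (Pf : fsym tau -> Prop)
  (M : structure tau) : structure (subvocab Pr Pf) :=
  @Structure (subvocab Pr Pf) (carrier M) (carrier_inh M)
    (fun (r : {r : rsym tau | Pr r}) => @rint tau M (proj1_sig r))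
    (fun (f : {f : fsym tau | Pf f}) => @fint tau M (proj1_sig f)).

Inductive term (tau : vocab) (k : nat) : Type :=
| tvar : 'I_k -> term tau k
| tapp : forall f : fsym tau, ('I_(far f) -> term tau k) -> term tau k.

Fixpoint teval (tau : vocab) (M : structure tau) (k : nat)
  (v : 'I_k -> carrier M) (t : term tau k) : carrier M :=
  match t with
  | tvar i => v i
  | tapp f ts => @fint tau M f (fun j => teval v (ts j))
  end.

Inductive atomic (tau : vocab) (k : nat) : Type :=
| aeq : term tau k -> term tau k -> atomic tau k
| arel : forall r : rsym tau, ('I_(rar r) -> term tau k) -> atomic tau k.

Definition asat (tau : vocab) (M : structure tau) (k : nat)
  (phi : atomic tau k) (v : 'I_k -> carrier M) : Prop :=
  match phi with
  | aeq t1 t2 => teval v t1 = teval v t2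
  | arel r ts => @rint tau M r (fun j => teval v (ts j))
  end.

Inductive qf (tau : vocab) (k : nat) : Type :=
| qpos : atomic tau k -> qf tau k
| qneg : atomic tau k -> qf tau k.

Definition qsat (tau : vocab) (M : structure tau) (k : nat)
  (phi : qf tau k) (v : 'I_k -> carrier M) : Prop :=
  match phi with
  | qpos a => asat a v
  | qneg a => ~ asat a v
  end.

(* The ordinal alpha is given by a well-ordered type (W, wlt); the      *)
(* ordinals beta <= alpha are represented by option W: None = alpha,     *)
(* Some w = the order type of the initial segment below w.              *)

Definition olt (W : Type) (wlt : W -> W -> Prop) (b c : option W) : Prop :=
  match b, c with
  | Some x, Some y => wlt x y
  | Some _, None => True
  | None, _ => False
  end.

Section Game.
Variables (tau : vocab) (W : Type) (wlt : W -> W -> Prop)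
          (M1 M2 : structure tau).

Record gstate : Type := GState {
  gA1 : carrier M1 -> Prop;
  gA2 : carrier M2 -> Prop;
  gh1 : carrier M1 -> nat;
  gh2 : carrier M2 -> nat;
  gg  : carrier M1 -> carrier M2 -> Prop;   (* graph of the partial map g *)
  gbeta : option W;
  gidx : nat }.

Definition dom1 (g : carrier M1 -> carrier M2 -> Prop) (a : carrier M1) : Prop :=
  exists b, g a b.
Definition dom2 (g : carrier M1 -> carrier M2 -> Prop) (b : carrier M2) : Prop :=
  exists a, g a b.

Definition partial_injection (g : carrier M1 -> carrier M2 -> Prop) : Prop :=
  (forall a b b', g a b -> g a b' -> b = b') /\
  (forall a a' b, g a b -> g a' b -> a = a').

Definition preserves_qf (g : carrier M1 -> carrier M2 -> Prop) : Prop :=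
  forall (k : nat) (phi : qf tau k) (v1 : 'I_k -> carrier M1) (v2 : 'I_k -> carrier M2),
    (forall i, g (v1 i) (v2 i)) -> qsat phi v1 -> qsat phi v2.

Definition is_state (s : gstate) : Prop :=
  le_aleph1 {a : carrier M1 | gA1 s a} /\
  le_aleph1 {b : carrier M2 | gA2 s b} /\
  partial_injection (gg s) /\
  (forall a, dom1 (gg s) a -> gA1 s a) /\
  (forall b, dom2 (gg s) b -> gA2 s b) /\
  preserves_qf (gg s) /\
  (forall a, dom1 (gg s) a -> gh1 s a < gidx s) /\
  (forall b, dom2 (gg s) b -> gh2 s b < gidx s).

Definition start_state : gstate :=
  {| gA1 := fun _ => False; gA2 := fun _ => False;
     gh1 := fun _ => 0; gh2 := fun _ => 0;
     gg := fun _ _ => False; gbeta := None; gidx := 0 |}.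

(* a move of AIS: the side iota, the new ordinal, the new set A' *)
Inductive move : Type :=
| mv1 : option W -> (carrier M1 -> Prop) -> move
| mv2 : option W -> (carrier M2 -> Prop) -> move.

Definition legal_move (s : gstate) (m : move) : Prop :=
  match m with
  | mv1 b A => olt wlt b (gbeta s) /\ (forall a, gA1 s a -> A a) /\
               le_aleph1 {a : carrier M1 | A a}
  | mv2 b A => olt wlt b (gbeta s) /\ (forall a, gA2 s a -> A a) /\
               le_aleph1 {a : carrier M2 | A a}
  end.

Definition extends_state (s s' : gstate) : Prop :=
  (forall a, gA1 s a -> gA1 s' a) /\
  (forall b, gA2 s b -> gA2 s' b) /\
  (forall a, gA1 s a -> gh1 s' a = gh1 s a) /\
  (forall b, gA2 s b -> gh2 s' b = gh2 s b) /\
  (forall a b, gg s a b -> gg s' a b).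

Definition legal_response (s : gstate) (m : move) (s' : gstate) : Prop :=
  is_state s' /\ gidx s' = (gidx s).+1 /\ extends_state s s' /\
  match m with
  | mv1 b A =>
      gbeta s' = b /\
      (forall a, gA1 s' a <-> A a) /\
      (forall y, gA2 s' y <-> gA2 s y \/ dom2 (gg s') y) /\
      (forall a, A a -> ~ gA1 s a -> (gidx s).+1 <= gh1 s' a) /\
      (forall a, dom1 (gg s') a <-> gA1 s a /\ gh1 s a < (gidx s).+1)
  | mv2 b A =>
      gbeta s' = b /\
      (forall b, gA2 s' b <-> A b) /\
      (forall x, gA1 s' x <-> gA1 s x \/ dom1 (gg s') x) /\
      (forall b, A b -> ~ gA2 s b -> (gidx s).+1 <= gh2 s' b) /\
      (forall b, dom2 (gg s') b <-> gA2 s b /\ gh2 s b < (gidx s).+1)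
  end.

(* strategies of ISO: from the history and the current state and move *)
Definition strategy : Type := list (gstate * move) -> gstate -> move -> gstate.

Inductive reachable (sigma : strategy) : list (gstate * move) -> gstate -> Prop :=
| reach_start : reachable sigma nil start_state
| reach_step : forall h s m, reachable sigma h s -> legal_move s m ->
    reachable sigma (h ++ (s, m) :: nil) (sigma h s m).

(* ISO has a winning strategy: the start is a state and ISO always has a
   legal reply (plays are finite as the ordinals decrease, and the player
   without a legal move loses). *)
Definition ISO_wins : Prop :=
  is_state start_state /\
  exists sigma : strategy, forall h s m,
    reachable sigma h s -> legal_move s m -> legal_response s m (sigma h s m).

End Game.

Definition E0 (tau : vocab) (W : Type) (wlt : W -> W -> Prop)
  (M1 M2 : structure tau) : Prop := @ISO_wins tau W wlt M1 M2.

Definition E1 (tau : vocab) (W : Type) (wlt : W -> W -> Prop) :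
  structure tau -> structure tau -> Prop :=
  Relation_Operators.clos_refl_sym_trans (structure tau) (@E0 tau W wlt).

(* Beth numbers: leBeth W wlt b X  <->  |X| <= beth_b(aleph_1), for     *)
(* b <= alpha (b : option W).  beth_0 = aleph_1, successor: power set,   *)
(* limit: supremum (= size of the disjoint union of the earlier stages). *)

Inductive leBeth (W : Type) (wlt : W -> W -> Prop) : option W -> Type -> Prop :=
| leBeth_base : forall b X, le_aleph1 X -> leBeth wlt b X
| leBeth_pow : forall b c X Y, olt wlt c b -> leBeth wlt c Y ->
    injects X (Y -> Prop) -> leBeth wlt b X
| leBeth_sup : forall b X (Y : {c : option W | olt wlt c b} -> Type),
    (forall c, leBeth wlt (proj1_sig c) (Y c)) ->
    injects X {c : {c : option W | olt wlt c b} & Y c} -> leBeth wlt b X.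

Definition le_beth_succ_alpha (W : Type) (wlt : W -> W -> Prop) (X : Type) : Prop :=
  exists Y : Type, leBeth wlt None Y /\ injects X (Y -> Prop).

Record L1_sentence (tau : vocab) : Type := L1Sentence {
  s_Pr : rsym tau -> Prop;
  s_Pf : fsym tau -> Prop;
  s_tau1_small : le_aleph1 ({r : rsym tau | s_Pr r} + {f : fsym tau | s_Pf f});
  (* alpha < aleph_2 *)
  s_W : Type;
  s_wlt : s_W -> s_W -> Prop;
  s_wo : strict_well_order s_wlt;
  s_alpha_small : le_aleph1 s_W;
  s_I : Type;
  s_I_small : le_beth_succ_alpha s_wlt s_I;
  s_models : s_I -> structure (subvocab s_Pr s_Pf) }.

Definition L1_sat (tau : vocab) (M : structure tau) (psi : L1_sentence tau) : Prop :=
  exists i : s_I psi,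
    E1 (@s_wlt tau psi) (restrict (@s_Pr tau psi) (@s_Pf tau psi) M) (s_models i).

(* Give the vocabulary an [n]-ary relation [R_n] for each [n]; a structure on [L] is then a
   colouring of the finite subsets of [L] (a set is coloured by whether one of its enumerations
   lies in [R_n]), and [L] fails the partition relation iff some such structure has no homogeneous
   set of size [aleph_1].  This class [K] is closed under [E^1] for [alpha = omega + 1]:
   if ISO wins the game and [X] is homogeneous in [M1], AIS plays [X] at [omega], then at
   [N, N-1, ..., 0] where [N] is a level containing uncountably many points of [X]; this forces
   those points into the domain of [g], and their image is homogeneous in [M2].  Conversely ISO
   wins as soon as every substructure of size [aleph_1] of either model embeds into the other:
   she follows an embedding of the set played at [omega], and postpones every other point beyond
   the moves left.  Hence [psi] is the disjunction, over the at most [beth_2(aleph_1)] sets [p] of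
   isomorphism types of such substructures, of a member of [K] realizing exactly [p]. *)

From Pilot Require Import Defs.
From mathcomp Require Import all_boot zify.
From Stdlib Require List Permutation Relations.
From Stdlib Require Import Wellfounded Lia Classical ClassicalEpsilon.
From Stdlib Require Import FunctionalExtensionality PropExtensionality ProofIrrelevance.

Set Implicit Arguments.
Unset Strict Implicit.
Unset Printing Implicit Defensive.

Local Notation cid := (constructive_indefinite_description _).
Local Notation xm := excluded_middle_informative.

Lemma injects_trans (X Y Z : Type) : injects X Y -> injects Y Z -> injects X Z.
Proof. by move=> [f Hf] [g Hg]; exists (g \o f) => x y /= /Hg /Hf. Qed.

Lemma injects_refl (X : Type) : injects X X.
Proof. by exists id. Qed.

Lemma countable_countType (T : countType) : countable_type T.
Proof. exists (@pickle T); exact: pcan_inj (@pickleK T). Qed.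

Lemma pickle_pair_inj (a b c d : nat) : pickle (a, b) = pickle (c, d) -> a = c /\ b = d.
Proof. by move/(pcan_inj (@pickleK _)) => [-> ->]. Qed.

Lemma sig_eq (T : Type) (P : T -> Prop) (x y : {x | P x}) : proj1_sig x = proj1_sig y -> x = y.
Proof. by case: x y => [x Hx] [y Hy] /= E; subst y; rewrite (proof_irrelevance _ Hx Hy). Qed.

Lemma swo_irrefl (W : Type) (lt : W -> W -> Prop) : strict_well_order lt -> forall x, ~ lt x x.
Proof. move=> [_ [_ Hwf]] x; elim: (Hwf x) => {}x _ IH H; exact: (IH x H H). Qed.

Lemma le_aleph1_inj (X Y : Type) : injects X Y -> le_aleph1 Y -> le_aleph1 X.
Proof.
move=> [f Hf] [lt [[Htr [Htot Hwf]] Hseg]].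
exists (fun x y => lt (f x) (f y)); split; first split.
- move=> x y z; exact: Htr.
- split; last exact: (wf_inverse_image _ _ lt f Hwf).
  move=> x y; case: (Htot (f x) (f y)) => [H|[/Hf H|H]]; tauto.
- move=> x; have [g Hg] := Hseg (f x).
  exists (fun y : {y : X | lt (f y) (f x)} => g (exist _ (f (proj1_sig y)) (proj2_sig y))).
  by move=> y1 y2 /Hg [] /Hf /sig_eq.
Qed.

Lemma countable_le_aleph1 (X : Type) : countable_type X -> le_aleph1 X.
Proof.
move=> HX; apply: (le_aleph1_inj HX).
exists (fun a b : nat => (a < b)%coq_nat); split; first split.
- move=> *; lia.
- split; [by move=> a b; lia | exact: Wf_nat.lt_wf].
- by move=> x; exists (fun y => proj1_sig y) => y1 y2 /sig_eq.
Qed.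

(* Countability of a predicate, avoiding subtypes. *)
Definition countable_set (T : Type) (P : T -> Prop) : Prop :=
  exists f : T -> nat, forall x y, P x -> P y -> f x = f y -> x = y.

Lemma countable_setE (T : Type) (P : T -> Prop) : countable_type {x | P x} <-> countable_set P.
Proof.
split.
- move=> [g Hg]; exists (fun x => if xm (P x) is left H then g (exist _ x H) else 0).
  move=> x y Px Py; case: (xm (P x)) => // Hx; case: (xm (P y)) => // Hy.
  by move/Hg => [].
- move=> [f Hf]; exists (fun x => f (proj1_sig x)) => [[x Hx] [y Hy]] /= E.
  exact/sig_eq/(Hf _ _ Hx Hy E).
Qed.

Lemma countable_set_sub (T : Type) (P Q : T -> Prop) :
  (forall x, P x -> Q x) -> countable_set Q -> countable_set P.
Proof. move=> H [f Hf]; exists f => x y Px Py; apply: Hf; auto. Qed.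

Lemma countable_set_bigcup (T I : Type) (F : I -> T -> Prop) :
  countable_type I -> (forall i, countable_set (F i)) -> countable_set (fun x => exists i, F i x).
Proof.
move=> [io Hio] /choice [fi Hfi].
pose idx x := if xm (exists i, F i x) is left H then Some (proj1_sig (cid H)) else None.
have Hidx x : (exists i, F i x) -> exists i, idx x = Some i /\ F i x.
  move=> H; rewrite /idx; case: (xm _) => // H'; eexists; split; first reflexivity.
  exact: (proj2_sig (cid H')).
exists (fun x => if idx x is Some i then pickle (io i, fi i x) else 0).
move=> x y /Hidx [i [-> Hi]] /Hidx [j [-> Hj]] /pickle_pair_inj [/Hio E]; subst j.
exact: Hfi.
Qed.

Lemma countable_set_image (A B : Type) (g : A -> B) :
  countable_type A -> countable_set (fun b => exists a, b = g a).
Proof.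
move=> [f Hf].
exists (fun b => if xm (exists a, b = g a) is left H then f (proj1_sig (cid H)) else 0).
move=> x y Hx Hy; case: (xm _) => // Hx'; case: (xm _) => // Hy' /Hf E.
by rewrite (proj2_sig (cid Hx')) (proj2_sig (cid Hy')) E.
Qed.

Lemma countable_set_add1 (T : Type) (P : T -> Prop) (c : T) :
  countable_set P -> countable_set (fun z => P z \/ z = c).
Proof.
move=> [f Hf]; exists (fun z => if xm (z = c) then 0 else (f z).+1).
move=> x y Hx Hy; case: (xm (x = c)) => Ex; case: (xm (y = c)) => Ey //; try congruence.
move=> [] E; case: Hx => // Hx; case: Hy => // Hy; exact: Hf.
Qed.

Lemma uncountable_level (T : Type) (X : T -> Prop) (h : T -> nat) :
  ~ countable_set X -> exists N, ~ countable_set (fun x => X x /\ h x <= N).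
Proof.
move=> HX; apply: NNPP => H; apply: HX.
apply: (@countable_set_sub _ _ (fun x => exists N, X x /\ h x <= N)).
  by move=> x Hx; exists (h x).
apply: countable_set_bigcup; first exact: countable_countType.
move=> N; apply: NNPP => HN; apply: H; by exists N.
Qed.

Section Aleph1Order.
Variables (X : Type) (lt : X -> X -> Prop).
Hypotheses (Hwo : strict_well_order lt) (Hseg : forall x, countable_set (fun y => lt y x))
           (HX : ~ countable_type X).

Lemma countable_set_bounded (C : X -> Prop) :
  countable_set C -> exists x, forall c, C c -> lt c x.
Proof.
move=> HC; have [_ [Htot _]] := Hwo.
pose below z := exists c : {c | C c}, lt z (proj1_sig c) \/ z = proj1_sig c.
have [x Hx] : exists x, ~ below x.
  apply: NNPP => H; have Hall z : below z by apply: NNPP => H'; apply: H; exists z.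
  have [f Hf] : countable_set below.
    apply: countable_set_bigcup; first exact/countable_setE.
    move=> [c _] /=; exact: countable_set_add1.
  by apply: HX; exists f => y z; apply: Hf.
exists x => c Cc; case: (Htot c x) => [//|[E|E]]; case: Hx; exists (exist _ c Cc); [right|left] => //=.
Qed.

(* Transfinite recursion: send each [y] above the (countable) image of its predecessors. *)
Lemma segment_countable_injects (Y : Type) (ltY : Y -> Y -> Prop) :
  strict_well_order ltY -> (forall y, countable_set (fun z => ltY z y)) -> injects Y X.
Proof.
move=> HwoY HsegY; have [_ [HtotY HwfY]] := HwoY.
have Hb y (rec : forall y', ltY y' y -> X) :
  exists x, forall c, (exists y' : {y' | ltY y' y}, c = rec (proj1_sig y') (proj2_sig y')) -> lt c x.
  apply: countable_set_bounded; apply: countable_set_image; exact/countable_setE.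
pose f := Fix HwfY (fun _ => X) (fun y rec => proj1_sig (cid (Hb y rec))).
have Hf y : f y = proj1_sig (cid (Hb y (fun y' _ => f y'))).
  rewrite /f Fix_eq // => y0 g1 g2 Heq; suff -> : g1 = g2 by [].
  by apply: functional_extensionality_dep => y1; apply: functional_extensionality.
have Hinc y y' : ltY y' y -> lt (f y') (f y).
  by move=> H; rewrite (Hf y); apply: (proj2_sig (cid (Hb y _))); exists (exist _ y' H).
exists f => y1 y2 E; case: (HtotY y1 y2) => [H|[//|H]];
  by have := Hinc _ _ H; rewrite E => /(swo_irrefl Hwo).
Qed.

End Aleph1Order.

Lemma le_aleph1_E (X : Type) : le_aleph1 X ->
  exists lt : X -> X -> Prop, strict_well_order lt /\ forall x, countable_set (fun y => lt y x).
Proof. move=> [lt [H1 H2]]; exists lt; split => // x; exact/countable_setE. Qed.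

Lemma le_aleph1_I (X : Type) (lt : X -> X -> Prop) :
  strict_well_order lt -> (forall x, countable_set (fun y => lt y x)) -> le_aleph1 X.
Proof. move=> H1 H2; exists lt; split => // x; exact/countable_setE. Qed.

Lemma le_aleph1_prod_bool (X : Type) : le_aleph1 X -> le_aleph1 (X * bool).
Proof.
move=> /le_aleph1_E [lt [Hwo Hseg]]; have [Htr [Htot Hwf]] := Hwo.
pose lt' (p q : X * bool) := lt p.1 q.1 \/ (p.1 = q.1 /\ p.2 = false /\ q.2 = true).
apply: (@le_aleph1_I _ lt'); first (split; last split).
- move=> [x a] [y b] [z c]; rewrite /lt' /=.
  move=> [H1|[E1 [E2 E3]]] [H2|[E4 [E5 E6]]]; subst; try tauto.
  left; exact: Htr H1 H2.
- move=> [x a] [y b]; rewrite /lt' /=; case: (Htot x y) => [H|[E|H]]; try tauto.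
  subst y; case: a; case: b; tauto.
- move=> [x a]; move: a; elim: (Hwf x) => {}x _ IH.
  have Hf : Acc lt' (x, false).
    by constructor => [[y b]]; rewrite /lt' /= => [[H|[_ [_ //]]]]; exact: IH.
  case; last exact: Hf.
  by constructor => [[y b]]; rewrite /lt' /= => [[H|[E [E' _]]]]; [exact: IH | subst].
- move=> [x a]; have [g Hg] := Hseg x.
  exists (fun p : X * bool => if xm (p.1 = x) then 0 else (pickle (g p.1, nat_of_bool p.2)).+1).
  move=> [y b] [z c]; rewrite /lt' /=.
  case: (xm (y = x)) => Ey; case: (xm (z = x)) => Ez //=.
  + subst y z => [[H|[_ [-> _]]]] [H'|[_ [-> _]]] _ //;
    by case: (swo_irrefl Hwo H) || case: (swo_irrefl Hwo H').
  + move=> [H|[E _]] [H'|[E' _]] //= [] /pickle_pair_inj [/Hg E1 E2].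
    have E3 := E1 H H'; subst z; by case: b c E2 => [] [].
Qed.

Lemma le_aleph1_sum (X Y : Type) : le_aleph1 X -> le_aleph1 Y -> le_aleph1 (X + Y).
Proof.
move=> HX HY; have [ltX [HwoX HsegX]] := le_aleph1_E HX; have [ltY [HwoY HsegY]] := le_aleph1_E HY.
case: (classic (countable_type X /\ countable_type Y)) => [[[f Hf] [g Hg]]|/not_and_or [CX|CY]].
- apply: countable_le_aleph1.
  exists (fun z => match z with inl x => pickle (0, f x) | inr y => pickle (1, g y) end).
  by move=> [x|y] [x'|y'] /pickle_pair_inj [] // _ E; [rewrite (Hf _ _ E) | rewrite (Hg _ _ E)].
- have [f Hf] := segment_countable_injects HwoX HsegX CX HwoY HsegY.
  apply: (le_aleph1_inj _ (le_aleph1_prod_bool HX)).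
  exists (fun z => match z with inl x => (x, false) | inr y => (f y, true) end).
  by move=> [x|y] [x'|y'] // [] => [->|/Hf ->].
- have [f Hf] := segment_countable_injects HwoY HsegY CY HwoX HsegX.
  apply: (le_aleph1_inj _ (le_aleph1_prod_bool HY)).
  exists (fun z => match z with inl x => (f x, false) | inr y => (y, true) end).
  by move=> [x|y] [x'|y'] // [] => [/Hf ->|->].
Qed.

Lemma le_aleph1_subset (T : Type) (P Q : T -> Prop) :
  (forall x, P x -> Q x) -> le_aleph1 {x | Q x} -> le_aleph1 {x | P x}.
Proof.
move=> H; apply: le_aleph1_inj; exists (fun x => exist Q (proj1_sig x) (H _ (proj2_sig x))).
by move=> x y [] /sig_eq.
Qed.

Lemma le_aleph1_union (T : Type) (P Q : T -> Prop) :
  le_aleph1 {x | P x} -> le_aleph1 {x | Q x} -> le_aleph1 {x | P x \/ Q x}.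
Proof.
move=> HP HQ; apply: (le_aleph1_inj _ (le_aleph1_sum HP HQ)).
exists (fun z : {x | P x \/ Q x} => match xm (P (proj1_sig z)) with
   | left H => inl (exist P _ H)
   | right H => inr (exist Q _ (or_ind (fun h => False_ind _ (H h)) id (proj2_sig z))) end).
move=> [x Hx] [y Hy] /=; case: (xm (P x)) => Px; case: (xm (P y)) => Py //= [] E;
  exact: sig_eq.
Qed.

Lemma le_aleph1_image (A B : Type) (f : A -> B) (P : A -> Prop) :
  le_aleph1 {a | P a} -> le_aleph1 {b | exists a, P a /\ b = f a}.
Proof.
apply: le_aleph1_inj.
exists (fun b : {b | exists a, P a /\ b = f a} =>
  exist P (proj1_sig (cid (proj2_sig b))) (proj1 (proj2_sig (cid (proj2_sig b))))).
move=> [b Hb] [b' Hb'] /= [] E; apply: sig_eq => /=.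
by rewrite (proj2 (proj2_sig (cid Hb))) (proj2 (proj2_sig (cid Hb'))) E.
Qed.

Lemma le_aleph1_empty (T : Type) : le_aleph1 {x : T | False}.
Proof. by apply: countable_le_aleph1; exists (fun _ => 0) => [[]]. Qed.

(* The continuum, coded as the binary relations on [nat]. *)
Definition Omega := nat -> nat -> Prop.

Lemma wo_increasing_not_below (X : Type) (lt : X -> X -> Prop) (D : X -> Prop) (phi : X -> X) :
  well_founded lt -> (forall z, D z -> D (phi z)) ->
  (forall z z', D z -> D z' -> lt z z' -> lt (phi z) (phi z')) ->
  forall z, D z -> ~ lt (phi z) z.
Proof.
move=> Hwf HD Hmono z; elim: (Hwf z) => {}z _ IH Dz H.
exact: (IH _ H (HD _ Dz) (Hmono _ _ (HD _ Dz) Dz H)).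
Qed.

(* Code [x] by its initial segment, transported to [nat] along a fixed enumeration [e x];
   two distinct points give non-isomorphic segments, one being a proper initial segment of the other. *)
Lemma le_aleph1_Omega (X : Type) : le_aleph1 X -> injects X Omega.
Proof.
move=> /le_aleph1_E [lt [Hwo /choice [e He]]]; have [Htr [Htot Hwf]] := Hwo.
pose code x : Omega := fun m k =>
  exists y y', [/\ lt y x, lt y' x, ~ lt y' y, e x y = m & e x y' = k].
exists code.
suff Hne : forall x x', lt x x' -> code x = code x' -> False.
  by move=> x x' E; case: (Htot x x') => [H|[//|H]]; [case: (Hne _ _ H E)|case: (Hne _ _ H (esym E))].
move=> x x' Hxx' E.
have Hphi z : lt z x' -> exists y, lt y x /\ e x y = e x' z.
  move=> Hz; have : code x' (e x' z) (e x' z) by exists z, z; split => //; exact: swo_irrefl.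
  by rewrite -E => -[y [y' [Hy _ _ H1 _]]]; exists y.
pose phi z := if xm (lt z x') is left H then proj1_sig (cid (Hphi z H)) else z.
have Hphi1 z : lt z x' -> lt (phi z) x /\ e x (phi z) = e x' z.
  move=> H; rewrite /phi; case: (xm _) => // H'; exact: (proj2_sig (cid (Hphi z H'))).
have Hmono z z' : lt z x' -> lt z' x' -> lt z z' -> lt (phi z) (phi z').
  move=> Hz Hz' Hzz'.
  have : code x' (e x' z) (e x' z').
    exists z, z'; split => // H; exact: (swo_irrefl Hwo (Htr _ _ _ H Hzz')).
  rewrite -E => -[y [y' [Hy Hy' Hn H1 H2]]].
  have [P1 Q1] := Hphi1 _ Hz; have [P2 Q2] := Hphi1 _ Hz'.
  have Ey : y = phi z by apply: (He x) => //; rewrite H1 Q1.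
  have Ey' : y' = phi z' by apply: (He x) => //; rewrite H2 Q2.
  subst y y'; case: (Htot (phi z) (phi z')) => [//|[Eq|//]].
  have /(He x' _ _ Hz Hz') Ez : e x' z = e x' z' by rewrite -Q1 -Q2 Eq.
  by subst z'; case: (swo_irrefl Hwo Hzz').
have Hge := wo_increasing_not_below Hwf (fun z Hz => Htr _ _ _ (proj1 (Hphi1 z Hz)) Hxx') Hmono.
have [P1 _] := Hphi1 _ Hxx'.
case: (Htot (phi x) x) => [H|[Eq|H]].
- exact: (Hge x Hxx').
- by rewrite Eq in P1; case: (swo_irrefl Hwo P1).
- by case: (swo_irrefl Hwo (Htr _ _ _ H P1)).
Qed.

Definition tau : vocab := @Vocab nat (fun n => n) Empty_set (fun e => match e with end).
Definition tau1 : vocab := @subvocab tau (fun _ => True) (fun _ => True).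
Definition tstruct := structure tau1.

Definition res (M : structure tau) : tstruct := restrict (fun _ => True) (fun _ => True) M.

Definition rel (M : tstruct) (n : nat) (v : 'I_n -> carrier M) : Prop :=
  @rint tau1 M (exist (fun _ => True) n I) v.

Definition rel_perm (M : tstruct) (n : nat) (v : 'I_n -> carrier M) : Prop :=
  exists s : 'I_n -> 'I_n, injective s /\ rel (v \o s).

Definition homogeneous (M : tstruct) (X : carrier M -> Prop) : Prop :=
  eq_aleph1 {x | X x} /\
  forall n (v v' : 'I_n -> carrier M), injective v -> injective v' ->
    (forall i, X (v i)) -> (forall i, X (v' i)) -> (rel_perm v <-> rel_perm v').

Definition hom_free (M : tstruct) : Prop := ~ exists X : carrier M -> Prop, homogeneous X.

Lemma rel_perm_comp (M : tstruct) n (v : 'I_n -> carrier M) (p : 'I_n -> 'I_n) :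
  injective p -> rel_perm (v \o p) -> rel_perm v.
Proof. by move=> Hp [s [Hs HR]]; exists (p \o s); split; first exact: inj_comp. Qed.

Lemma rel_perm_range (M : tstruct) n (u v : 'I_n -> carrier M) :
  injective u -> injective v -> (forall i, exists j, u i = v j) -> (forall j, exists i, v j = u i) ->
  rel_perm u <-> rel_perm v.
Proof.
move=> Hu Hv /choice [p Hp] /choice [p' Hp'].
have Ip : injective p by move=> i j E; apply: Hu; rewrite !Hp E.
have Ip' : injective p' by move=> i j E; apply: Hv; rewrite !Hp' E.
have Eu : v \o p = u by apply: functional_extensionality => i /=; rewrite -Hp.
have Ev : u \o p' = v by apply: functional_extensionality => j /=; rewrite -Hp'.
by split => HQ; [apply: (rel_perm_comp Ip); rewrite Eu | apply: (rel_perm_comp Ip'); rewrite Ev].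
Qed.

Lemma In_mem (T : eqType) (x : T) (s : seq T) : List.In x s <-> x \in s.
Proof.
elim: s => [|y s IH] //=; rewrite in_cons; split.
- by move=> [->|/IH ->]; rewrite ?eqxx ?orbT.
- by case/orP => [/eqP ->|/IH]; auto.
Qed.

Lemma NoDup_map_inj (A B : Type) (f : A -> B) (l : list A) :
  (forall x y, List.In x l -> List.In y l -> f x = f y -> x = y) ->
  List.NoDup l -> List.NoDup (List.map f l).
Proof.
elim: l => [|a l IH] Hf Hnd /=; first by constructor.
inversion Hnd as [|? ? Ha Hl]; subst; constructor.
- move=> /List.in_map_iff [x [Ex Hx]]; apply: Ha.
  by have E := Hf x a (or_intror Hx) (or_introl erefl) Ex; subst.
- by apply: IH => // x y Hx Hy; apply: Hf; right.
Qed.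

Lemma NoDup_enum n : List.NoDup (enum 'I_n).
Proof.
have := enum_uniq 'I_n; elim: (enum 'I_n) => [|a s IH] /=; first by constructor.
case/andP => Ha Hs; constructor; last exact: IH.
by move/In_mem; rewrite (negbTE Ha).
Qed.

Lemma In_map_enum (A : Type) n (g : 'I_n -> A) x :
  List.In x (List.map g (enum 'I_n)) <-> exists i, g i = x.
Proof.
rewrite List.in_map_iff; split; first by move=> [i [E _]]; exists i.
by move=> [i E]; exists i; split => //; apply/In_mem; rewrite mem_enum.
Qed.

Lemma length_size (A : Type) (s : seq A) : List.length s = size s.
Proof. by elim: s => //= ? ? ->. Qed.

Lemma nth_tuple_inj (A : Type) (l : list A) (d : A) n :
  List.NoDup l -> List.length l = n -> injective (fun i : 'I_n => List.nth i l d).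
Proof.
move=> Hl Ln i j /(proj1 (List.NoDup_nth l d) Hl) H.
by apply: val_inj; apply: H; rewrite Ln; apply/ltP.
Qed.

Lemma tuple_list_spec (A : Type) n (w : 'I_n -> A) : injective w ->
  [/\ List.NoDup (List.map w (enum 'I_n)), List.length (List.map w (enum 'I_n)) = n &
      forall x, List.In x (List.map w (enum 'I_n)) <-> exists i, w i = x].
Proof.
move=> Hw; split; last exact: In_map_enum.
- by apply: NoDup_map_inj (NoDup_enum n) => i j _ _ /Hw.
- by rewrite List.length_map length_size size_enum_ord.
Qed.

Lemma eq_aleph1_injects (A B : Type) : injects A B -> injects B A -> eq_aleph1 B -> eq_aleph1 A.
Proof.
move=> HAB HBA [H1 H2]; split; first exact: le_aleph1_inj H1.
by move=> HA; apply: H2; exact: injects_trans HBA HA.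
Qed.

Section ColouringOfStructure.
Variables (M : tstruct) (L : Type) (f : carrier M -> L).
Hypothesis (If : injective f).

Definition coloured (l : list L) : Prop :=
  exists m (u : 'I_m -> carrier M),
    [/\ injective u, forall x, List.In x l <-> exists i, f (u i) = x & rel_perm u].

Definition colouring_of (l : list L) : bool := if xm (coloured l) then true else false.

Lemma colouring_of_perm (l l' : list L) :
  Permutation.Permutation l l' -> colouring_of l = colouring_of l'.
Proof.
move=> Hp; have Hin x : List.In x l <-> List.In x l'.
  by split; apply: Permutation.Permutation_in; last exact: Permutation.Permutation_sym.
suff E : coloured l <-> coloured l'.
  by rewrite /colouring_of; case: xm; case: xm => // H1 H2; exfalso; tauto.
by split => -[m [u [Hu Hr HQ]]]; exists m, u; split => // x; rewrite -Hr Hin.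
Qed.

Lemma colouring_of_tuple n (v : 'I_n -> carrier M) : injective v ->
  colouring_of (List.map (f \o v) (enum 'I_n)) = true <-> rel_perm v.
Proof.
move=> Hv; rewrite /colouring_of; case: (xm _) => HP; split => //.
- move=> _; case: HP => m [u [Hu Hr HQ]].
  have H1 i : exists j, f (u i) = f (v j).
    have /In_map_enum [j Ej] : List.In (f (u i)) (List.map (f \o v) (enum 'I_n)) by apply/Hr; exists i.
    by exists j.
  have H2 j : exists i, f (v j) = f (u i).
    have /Hr [i Ei] : List.In (f (v j)) (List.map (f \o v) (enum 'I_n)) by apply/In_map_enum; exists j.
    by exists i.
  have Hmn : m = n.
    have /choice [p Hp] := H1; have /choice [p' Hp'] := H2.
    apply/eqP; rewrite eqn_leq; apply/andP; split; [apply: (@inj_leq _ _ p) | apply: (@inj_leq _ _ p')].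
    - by move=> i j E; apply/Hu/If; rewrite !Hp E.
    - by move=> i j E; apply/Hv/If; rewrite !Hp' E.
  subst m; apply/(rel_perm_range Hu Hv) => // i;
    [have [j /If] := H1 i | have [j /If] := H2 i]; by exists j.
- by move=> HQv; case: HP; exists n, v; split => // x; rewrite In_map_enum.
Qed.

End ColouringOfStructure.

Lemma hom_free_not_arrows (M : tstruct) (L : Type) :
  equipotent (carrier M) L -> hom_free M -> ~ arrows_aleph1_fin L.
Proof.
move=> [f [f' Hff' Hf'f]] HK Harr; have If := can_inj Hff'.
have [X [HX Hh]] := Harr (colouring_of f) (fun l l' _ => @colouring_of_perm _ _ f l l').
apply: HK; exists (fun x => X (f x)); split.
- apply: (eq_aleph1_injects _ _ HX).
  + exists (fun x : {x | X (f x)} => exist X (f (proj1_sig x)) (proj2_sig x)).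
    by move=> x y [] /If /sig_eq.
  + exists (fun y : {y | X y} => exist (fun x => X (f x)) (f' (proj1_sig y))
        (eq_ind_r X (proj2_sig y) (Hf'f (proj1_sig y)))).
    by move=> x y [] /(can_inj Hf'f) /sig_eq.
- move=> n v v' Hv Hv' HXv HXv'.
  have [N1 L1 X1] := tuple_list_spec (inj_comp If Hv).
  have [N2 L2 X2] := tuple_list_spec (inj_comp If Hv').
  rewrite -(colouring_of_tuple If Hv) -(colouring_of_tuple If Hv').
  suff -> : colouring_of f (List.map (f \o v) (enum 'I_n)) = colouring_of f (List.map (f \o v') (enum 'I_n)) by [].
  by apply: Hh N1 N2 L1 L2 _ _ => x; [move/X1 => [i <-]; exact: HXv | move/X2 => [i <-]; exact: HXv'].
Qed.

Section StructureOfColouring.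
Variables (L : Type) (HL : inhabited L) (c : list L -> bool).
Hypothesis Hc : forall l l' : list L, List.NoDup l -> Permutation.Permutation l l' -> c l = c l'.

Definition structure_of : structure tau :=
  @Structure tau L HL (fun (r : nat) (v : 'I_r -> L) => c (List.map v (enum 'I_r)) = true)
    (fun f => match f with end).

Lemma rel_perm_nth (l : list L) (d : L) n : List.NoDup l -> List.length l = n ->
  c l = true <-> @rel_perm (res structure_of) n (fun i => List.nth i l d).
Proof.
set u := fun i : 'I_n => List.nth i l d => Hl Ln; have Iu := @nth_tuple_inj _ l d n Hl Ln.
have Hperm (s : 'I_n -> 'I_n) : injective s -> c (List.map (u \o s) (enum 'I_n)) = c l.
  move=> Hs; symmetry; apply: Hc => //.
  have [Nus _ Ius] := tuple_list_spec (inj_comp Iu Hs).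
  apply: Permutation.NoDup_Permutation => // x; rewrite Ius; split.
  - move=> /(List.In_nth _ _ d) [k [Hk <-]].
    have Hk' : k < n by rewrite -Ln; apply/ltP.
    have [s' Hs1 Hs2] := injF_bij Hs.
    by exists (s' (Ordinal Hk')); rewrite /= Hs2.
  - by move=> [i <-]; apply: List.nth_In; rewrite Ln; apply/ltP.
split.
- move=> Hcl; exists id; split => //.
  by rewrite /rel /= -Hcl -(Hperm id).
- by move=> [s [Hs HR]]; rewrite -(Hperm s Hs).
Qed.

End StructureOfColouring.

Lemma not_arrows_hom_free (L : Type) : inhabited L -> ~ arrows_aleph1_fin L ->
  exists M : structure tau, equipotent (carrier M) L /\ hom_free (res M).
Proof.
move=> HL Hna; have [c Hnc] := not_all_ex_not _ _ Hna.
have [Hc Hnhom] := imply_to_and _ _ Hnc.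
exists (structure_of HL c); split; first by exists id; exists id.
move=> [X [HX Hh]]; apply: Hnhom; exists X; split => //.
have [d] := HL.
move=> n l l' Nl Nl' Ll Ll' Xl Xl'; apply/Bool.eq_iff_eq_true.
rewrite (rel_perm_nth HL Hc d Nl Ll) (rel_perm_nth HL Hc d Nl' Ll').
apply: Hh; try exact: nth_tuple_inj.
- by move=> i; apply/Xl/List.nth_In; rewrite Ll; apply/ltP.
- by move=> i; apply/Xl'/List.nth_In; rewrite Ll'; apply/ltP.
Qed.

Lemma partial_injection_flip (tau : vocab) (M1 M2 : structure tau) (g : carrier M1 -> carrier M2 -> Prop) :
  partial_injection g -> partial_injection (fun b a => g a b).
Proof. by move=> [H1 H2]; split => *; [apply: H2|apply: H1]; eassumption. Qed.

Lemma preserves_qf_flip (tau : vocab) (M1 M2 : structure tau) (g : carrier M1 -> carrier M2 -> Prop) :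
  preserves_qf g -> preserves_qf (fun b a => g a b).
Proof.
move=> Hq k phi v2 v1 Hg; case: phi => a /= H.
- by apply: NNPP => H'; exact: (Hq k (qneg a) v1 v2 Hg H' H).
- by move=> H'; exact: H (Hq k (qpos a) v1 v2 Hg H').
Qed.

Lemma term_is_var k (t : term tau1 k) :
  exists i, forall (M : tstruct) (v : 'I_k -> carrier M), teval v t = v i.
Proof. by case: t => [i|[[] _] _]; exists i. Qed.

(* Terms of the purely relational [tau1] are variables. *)
Lemma preserves_qf_of_rel (M1 M2 : tstruct) (g : carrier M1 -> carrier M2 -> Prop) :
  partial_injection g ->
  (forall n (v1 : 'I_n -> carrier M1) v2, (forall i, g (v1 i) (v2 i)) -> (rel v1 <-> rel v2)) ->
  preserves_qf g.
Proof.
move=> [Hfun Hinj] HR k phi v1 v2 Hg.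
have Heq (t1 t2 : term tau1 k) : teval v1 t1 = teval v1 t2 <-> teval v2 t1 = teval v2 t2.
  have [i Hi] := term_is_var t1; have [j Hj] := term_is_var t2.
  rewrite !Hi !Hj; split => E.
  - by apply: (Hfun (v1 i)); last rewrite E; exact: Hg.
  - by apply: (Hinj _ _ (v2 i)); last rewrite E; exact: Hg.
have Hrel (r : rsym tau1) (ts : 'I_(rar r) -> term tau1 k) : asat (arel ts) v1 <-> asat (arel ts) v2.
  case: r ts => n [] ts /=; have /choice [ix Hix] := fun j => term_is_var (ts j).
  have -> : (fun j => teval v1 (ts j)) = v1 \o ix by apply: functional_extensionality => j; rewrite Hix.
  have -> : (fun j => teval v2 (ts j)) = v2 \o ix by apply: functional_extensionality => j; rewrite Hix.
  by apply: (HR n) => j; exact: Hg.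
case: phi => -[t1 t2|r ts] /=.
- by move/Heq.
- by move/Hrel.
- by move=> H /Heq.
- by move=> H /Hrel.
Qed.

Lemma preserves_qf_rel (M1 M2 : tstruct) (g : carrier M1 -> carrier M2 -> Prop) :
  preserves_qf g ->
  forall n (v1 : 'I_n -> carrier M1) v2, (forall i, g (v1 i) (v2 i)) -> (rel v1 <-> rel v2).
Proof.
move=> Hq n v1 v2 Hg.
pose a : atomic tau1 n := @arel tau1 n (exist (fun _ => True) n I) (fun j => tvar tau1 j).
split => H; first exact: (Hq n (qpos a) v1 v2 Hg).
by apply: NNPP => H'; exact: (Hq n (qneg a) v1 v2 Hg H').
Qed.

Lemma preserves_qf_rel_perm (M1 M2 : tstruct) (g : carrier M1 -> carrier M2 -> Prop) :
  preserves_qf g ->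
  forall n (v1 : 'I_n -> carrier M1) v2, (forall i, g (v1 i) (v2 i)) -> (rel_perm v1 <-> rel_perm v2).
Proof.
move=> Hq n v1 v2 Hg.
have E s : rel (v1 \o s) <-> rel (v2 \o s) by apply: (preserves_qf_rel Hq) => i; exact: Hg.
by split => -[s [Hs /E HR]]; exists s.
Qed.

Lemma homogeneous_transfer (M1 M2 : tstruct) (g : carrier M1 -> carrier M2 -> Prop)
    (X X' : carrier M1 -> Prop) (A2 : carrier M2 -> Prop) :
  partial_injection g -> preserves_qf g -> homogeneous X ->
  (forall a, X' a -> X a) -> ~ countable_set X' -> (forall a, X' a -> exists b, g a b) ->
  (forall a b, g a b -> A2 b) -> le_aleph1 {b | A2 b} ->
  homogeneous (fun b => exists a, X' a /\ g a b).
Proof.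
move=> [Hfun Hinj] Hq [_ HX] HX'X HX'c Hdom HA2 HA2s.
have [d2] := carrier_inh M2.
have /choice [pick Hpick] : forall a, exists b, X' a -> g a b.
  by move=> a; case: (classic (X' a)) => [/Hdom [b Hb]|Hn]; [exists b | exists d2].
split; first split.
- by apply: le_aleph1_subset HA2s => b [a [_ /HA2]].
- move/countable_setE => [f Hf]; apply: HX'c; exists (fun a => f (pick a)) => a a' Ha Ha' E.
  have Ha1 := Hpick a Ha; have Ha1' := Hpick a' Ha'.
  have E' := Hf _ _ (ex_intro _ a (conj Ha (Hpick a Ha))) (ex_intro _ a' (conj Ha' (Hpick a' Ha'))) E.
  by rewrite E' in Ha1; exact: Hinj Ha1 Ha1'.
- have pull n (u : 'I_n -> carrier M2) : injective u -> (forall i, exists a, X' a /\ g a (u i)) ->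
      exists v : 'I_n -> carrier M1, [/\ injective v, forall i, X (v i) & rel_perm v <-> rel_perm u].
    move=> Hu /choice [v Hv]; exists v; split.
    + move=> i j E; apply: Hu; apply: (Hfun (v i)); first exact: (proj2 (Hv i)).
      by rewrite E; exact: (proj2 (Hv j)).
    + by move=> i; apply: HX'X; exact: (proj1 (Hv i)).
    + by apply: (preserves_qf_rel_perm Hq) => i; exact: (proj2 (Hv i)).
  move=> n u u' Hu Hu' Yu Yu'.
  have [v [Hv Xv <-]] := pull n u Hu Yu; have [v' [Hv' Xv' <-]] := pull n u' Hu' Yu'.
  exact: HX.
Qed.

Section GameSymmetry.
Variables (voc : vocab) (W : Type) (wlt : W -> W -> Prop).

Definition swap_state (M1 M2 : structure voc) (s : gstate W M1 M2) : gstate W M2 M1 :=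
  @GState voc W M2 M1 (gA2 s) (gA1 s) (gh2 s) (gh1 s) (fun b a => gg s a b) (gbeta s) (gidx s).

Definition swap_move (M1 M2 : structure voc) (m : move W M1 M2) : move W M2 M1 :=
  match m with mv1 b A => @mv2 voc W M2 M1 b A | mv2 b B => @mv1 voc W M2 M1 b B end.

Lemma swap_stateK (M1 M2 : structure voc) (s : gstate W M1 M2) : swap_state (swap_state s) = s.
Proof. by case: s. Qed.

Lemma swap_moveK (M1 M2 : structure voc) (m : move W M1 M2) : swap_move (swap_move m) = m.
Proof. by case: m. Qed.

Lemma is_state_swap (M1 M2 : structure voc) (s : gstate W M1 M2) : is_state s -> is_state (swap_state s).
Proof.
move=> [L1 [L2 [Hp [D1 [D2 [Hq [H1 H2]]]]]]].
by do 2!split => //; split; [exact: partial_injection_flip | do 2!split => //; split; first exact: preserves_qf_flip].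
Qed.

Lemma legal_move_swap (M1 M2 : structure voc) (s : gstate W M1 M2) m :
  legal_move wlt s m -> legal_move wlt (swap_state s) (swap_move m).
Proof. by case: m. Qed.

Lemma legal_response_swap (M1 M2 : structure voc) (s s' : gstate W M1 M2) m :
  legal_response s m s' -> legal_response (swap_state s) (swap_move m) (swap_state s').
Proof.
move=> [Hs [Hi [[E1 [E2 [E3 [E4 E5]]]] Hm]]]; split; first exact: is_state_swap.
split => //; split; first by do 4!split => //; move=> b a; exact: E5.
by case: m Hm.
Qed.

Lemma E0_sym (M1 M2 : structure voc) : E0 wlt M1 M2 -> E0 wlt M2 M1.
Proof.
move=> [Hst [sigma Hwin]]; split; first exact: (is_state_swap Hst).
pose swap_hist := map (fun p : gstate W M2 M1 * move W M2 M1 => (swap_state p.1, swap_move p.2)).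
pose sigma' h s m := swap_state (sigma (swap_hist h) (swap_state s) (swap_move m)).
have Hreach h s : reachable wlt sigma' h s -> reachable wlt sigma (swap_hist h) (swap_state s).
  elim => [|h0 s0 m0 _ IH L0]; first exact: reach_start.
  rewrite /swap_hist map_cat /= /sigma' swap_stateK.
  exact: reach_step IH (legal_move_swap L0).
exists sigma' => h s m /Hreach R /legal_move_swap L.
by have := legal_response_swap (Hwin _ _ _ R L); rewrite swap_stateK swap_moveK.
Qed.

End GameSymmetry.

(* [None] on top of the naturals: the ordinal [alpha = omega + 1] of the game. *)
Definition omega_succ := option nat.
Definition omega_succ_lt (a b : omega_succ) : Prop :=
  match a, b with
  | Some x, Some y => (x < y)%coq_nat
  | Some _, None => True
  | None, _ => False
  end.

Lemma omega_succ_wo : strict_well_order omega_succ_lt.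
Proof.
split; [|split].
- move=> [x|] [y|] [z|] //= H1 H2; exact: PeanoNat.Nat.lt_trans H1 H2.
- move=> [x|] [y|] /=; [|by left|by right; right|by right; left].
  case: (PeanoNat.Nat.lt_total x y) => [H|[->|H]]; [by left|by right; left|by right; right].
- have Hs x : Acc omega_succ_lt (Some x).
    elim: (Wf_nat.lt_wf x) => {}x _ IH; constructor; case => [y|] H; [exact: IH | by []].
  by case => [x|]; [exact: Hs | constructor; case => [y|] H; [exact: Hs | by []]].
Qed.

Section CountdownPlay.
Variables (M1 M2 : tstruct) (sigma : strategy omega_succ M1 M2).
Hypothesis Hwin : forall h s m, reachable omega_succ_lt sigma h s -> legal_move omega_succ_lt s m ->
  legal_response s m (sigma h s m).
Variables (X : carrier M1 -> Prop) (h : carrier M1 -> nat).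
Hypothesis HXs : le_aleph1 {x | X x}.

Definition plays_X (s : gstate omega_succ M1 M2) : Prop :=
  (forall a, gA1 s a <-> X a) /\ (forall a, X a -> gh1 s a = h a).

Lemma countdown_step hist s b : reachable omega_succ_lt sigma hist s -> plays_X s ->
  olt omega_succ_lt b (gbeta s) ->
  let s' := sigma hist s (mv1 M2 b X) in
  [/\ reachable omega_succ_lt sigma (hist ++ [:: (s, mv1 M2 b X)]) s', is_state s', plays_X s',
      gbeta s' = b /\ gidx s' = (gidx s).+1 & forall a, dom1 (gg s') a <-> X a /\ h a < (gidx s).+1].
Proof.
move=> R [HA Hh] Hb.
have L : legal_move omega_succ_lt s (mv1 M2 b X) by split => //; split => // a /HA.
have [Hs' [Hidx [[_ [_ [E3 _]]] [Hb' [HA' [_ [_ Hdom]]]]]]] := Hwin R L.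
split => //; first exact: reach_step R L.
- by split => // a Xa; rewrite E3 ?Hh //; apply/HA.
- by move=> a; rewrite Hdom HA; split => -[Xa Ha]; rewrite ?Hh // -?Hh in Ha *.
Qed.

(* AIS plays [X] at every move, with ordinals [N, N-1, ..., 0]: each move of ISO brings
   every element of the next level into the domain of [g]. *)
Lemma countdown hist0 s0 N : reachable omega_succ_lt sigma hist0 s0 -> plays_X s0 ->
  gbeta s0 = Some None -> gidx s0 = 1 ->
  forall j, j <= N -> exists hist s, [/\ reachable omega_succ_lt sigma hist s, is_state s,
    plays_X s, gbeta s = Some (Some (N - j)) & forall a, dom1 (gg s) a <-> X a /\ h a < j.+2] /\
    gidx s = j.+2.
Proof.
move=> R0 HX0 Hb0 Hi0; elim => [|j IH] Hj.
- have Hlt : olt omega_succ_lt (Some (Some N)) (gbeta s0) by rewrite Hb0.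
  have [R Hs HX [Hb Hi] Hd] := countdown_step R0 HX0 Hlt.
  by do 2!eexists; split; first split;
    [exact: R | done | done | by rewrite Hb subn0 | by rewrite -Hi0 | by rewrite Hi Hi0].
- have [hist [s [[R _ HX Hb _] Hi]]] := IH (ltnW Hj).
  have Hlt : olt omega_succ_lt (Some (Some (N - j.+1))) (gbeta s).
    by rewrite Hb /=; apply/ltP; rewrite subnS prednK ?subn_gt0.
  have [R' Hs' HX' [Hb' Hi'] Hd'] := countdown_step R HX Hlt.
  by do 2!eexists; split; first split; [exact: R' | done | done | done | by rewrite -Hi | by rewrite Hi' Hi].
Qed.

End CountdownPlay.

Lemma E0_homogeneous (M1 M2 : tstruct) : E0 omega_succ_lt M1 M2 ->
  forall X : carrier M1 -> Prop, homogeneous X -> exists Y : carrier M2 -> Prop, homogeneous Y.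
Proof.
move=> [_ [sigma Hwin]] X HX; have [[HXs HXnc] _] := HX.
have L0 : legal_move omega_succ_lt (start_state omega_succ M1 M2) (mv1 M2 (Some None) X) by [].
have R0 := reach_step (reach_start omega_succ_lt sigma) L0.
have [_ [Hi0 [_ [Hb0 [HA0 _]]]]] := Hwin _ _ _ (reach_start omega_succ_lt sigma) L0.
set s1 := sigma _ _ _ in R0 Hi0 Hb0 HA0.
have [N HN] : exists N, ~ countable_set (fun x => X x /\ gh1 s1 x <= N).
  by apply: uncountable_level => /countable_setE.
have HX1 : plays_X X (gh1 s1) s1 by split.
have [hist [s [[_ Hs _ _ Hd] _]]] := countdown Hwin HXs R0 HX1 Hb0 Hi0 (leqnn N).
have [_ [HA2s [Hpinj [_ [Hdom2 [Hq _]]]]]] := Hs.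
exists (fun b => exists a, (X a /\ gh1 s1 a <= N) /\ gg s a b).
apply: (@homogeneous_transfer _ _ _ _ _ (gA2 s) Hpinj Hq HX) => //.
- by move=> a [].
- by move=> a [Xa Ha]; apply/Hd; split => //; rewrite ltnS ltnW.
- by move=> a b H; apply: Hdom2; exists a.
Qed.

Definition fin_rank (b : option omega_succ) : nat := if b is Some (Some r) then r else 0.

Lemma olt_below_fin (b : option omega_succ) r :
  olt omega_succ_lt b (Some (Some r)) -> exists r', b = Some (Some r') /\ r' < r.
Proof. by case: b => [[r'|]|] //= /ltP H; exists r'. Qed.

Lemma olt_below_not_top (b c : option omega_succ) :
  olt omega_succ_lt b c -> c <> None -> exists r, b = Some (Some r).
Proof. by case: c => [[r|]|] //; case: b => [[r'|]|] //= *; exists r'. Qed.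

Section IsoReply.
Variables (M1 M2 : tstruct) (P1 : carrier M1 -> Prop) (P2 : carrier M2 -> Prop)
          (G : carrier M1 -> carrier M2 -> Prop).

Record small_rel_bijection : Prop := SmallRelBijection {
  srb_fun : forall a b b', G a b -> G a b' -> b = b';
  srb_inj : forall a a' b, G a b -> G a' b -> a = a';
  srb_rel : forall n (v1 : 'I_n -> carrier M1) v2, (forall i, G (v1 i) (v2 i)) -> (rel v1 <-> rel v2);
  srb_dom : forall a, P1 a -> exists b, G a b;
  srb_ran : forall b, P2 b -> exists a, G a b;
  srb_sub : forall a b, G a b -> P1 a /\ P2 b;
  srb_small1 : le_aleph1 {a | P1 a};
  srb_small2 : le_aleph1 {b | P2 b} }.

(* ISO follows [G]: a new element enters the domain of [g] at the next move if it is in [P1]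
   (resp. [P2]), and otherwise gets a level beyond the number of moves left. *)
Definition iso_reply (s : gstate omega_succ M1 M2) (m : move omega_succ M1 M2) :
    gstate omega_succ M1 M2 :=
  let n := gidx s in
  match m with
  | mv1 b A =>
    @GState tau1 omega_succ M1 M2 A
      (fun y => gA2 s y \/ exists a, G a y /\ gA1 s a /\ gh1 s a < n.+1)
      (fun a => if xm (gA1 s a) then gh1 s a else if xm (P1 a) then n.+1 else (n + fin_rank b).+2)
      (fun y => if xm (gA2 s y) then gh2 s y else 0)
      (fun a y => G a y /\ gA1 s a /\ gh1 s a < n.+1)
      b n.+1
  | mv2 b B =>
    @GState tau1 omega_succ M1 M2
      (fun x => gA1 s x \/ exists y, G x y /\ gA2 s y /\ gh2 s y < n.+1)
      B
      (fun x => if xm (gA1 s x) then gh1 s x else 0)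
      (fun y => if xm (gA2 s y) then gh2 s y else if xm (P2 y) then n.+1 else (n + fin_rank b).+2)
      (fun a y => G a y /\ gA2 s y /\ gh2 s y < n.+1)
      b n.+1
  end.

Record iso_invariant (s : gstate omega_succ M1 M2) : Prop := IsoInvariant {
  inv_state : is_state s;
  inv_level1 : forall a, gA1 s a -> (P1 a /\ gh1 s a <= gidx s) \/
    (~ P1 a /\ exists r, gbeta s = Some (Some r) /\ (gidx s + r).+1 <= gh1 s a);
  inv_level2 : forall b, gA2 s b -> (P2 b /\ gh2 s b <= gidx s) \/
    (~ P2 b /\ exists r, gbeta s = Some (Some r) /\ (gidx s + r).+1 <= gh2 s b);
  inv_gg : forall a b, gg s a b <->
    [/\ G a b, gA1 s a, gA2 s b, gh1 s a < gidx s & gh2 s b < gidx s] }.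

Hypothesis HG : small_rel_bijection.

Section SideOneMove.
Variables (s : gstate omega_succ M1 M2) (b : option omega_succ) (A : carrier M1 -> Prop).
Hypotheses (Hs : iso_invariant s) (Hm : legal_move omega_succ_lt s (mv1 M2 b A))
  (Hfirst : gbeta s = None -> b = Some None -> forall a, A a -> P1 a).

Local Notation s' := (iso_reply s (mv1 M2 b A)).

Lemma reply1_outside_fin a : A a -> ~ P1 a -> exists r, b = Some (Some r).
Proof.
move=> Aa nP; have [Hb _] := Hm; case E : (gbeta s) => [x|].
- by apply: (olt_below_not_top Hb); rewrite E.
- move: Hb (Hfirst E); rewrite E; case: b => [[r|]|] //= _ H; first by exists r.
  by case: nP; apply: H.
Qed.

Lemma reply1_dom a : gA1 s a -> gh1 s a < (gidx s).+1 -> exists y, G a y.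
Proof.
move=> Aa Ha; case: (inv_level1 Hs Aa) => [[Pa _]|[_ [r [_ Hr]]]]; first exact: (srb_dom HG Pa).
by exfalso; lia.
Qed.

Lemma reply1_level2 a y : G a y -> gh2 s' y < (gidx s).+1.
Proof.
move=> Gy /=; case: (xm (gA2 s y)) => // Ay.
have [_ Py] := srb_sub HG Gy.
by case: (inv_level2 Hs Ay) => -[] // _ H; rewrite ltnS.
Qed.

Lemma reply1_level1_new a : ~ gA1 s a -> (gidx s).+1 <= gh1 s' a.
Proof.
by move=> nA /=; case: xm => [/nA []|?] /=; case: xm => ? /=; lia.
Qed.

Lemma reply1_state : is_state s'.
Proof.
have [_ [HAA HAle]] := Hm; have [Hle1 [Hle2 _]] := inv_state Hs.
have Hpi : partial_injection (gg s').
  by split => [a y y' [H _] [H' _]|a a' y [H _] [H' _]]; [exact: srb_fun H H' | exact: srb_inj H H'].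
split => //; split; [|split; [|split; [|split; [|split; [|split]]]]] => //=.
- apply: le_aleph1_union => //; apply: le_aleph1_subset (srb_small2 HG) => y [a [Gy _]].
  exact: (proj2 (srb_sub HG Gy)).
- by move=> a [y [_ [Aa _]]]; exact: HAA.
- by move=> y [a H]; right; exists a.
- apply: preserves_qf_of_rel Hpi _ => k v1 v2 H; apply: (srb_rel HG) => i; exact: (proj1 (H i)).
- by move=> a [y [_ [Aa Ha]]]; case: (xm (gA1 s a)).
- by move=> y [a [Gy _]]; exact: reply1_level2 Gy.
Qed.

Lemma reply1_legal : legal_response s (mv1 M2 b A) s'.
Proof.
have [_ [HAA _]] := Hm.
split; first exact: reply1_state.
split => //; split.
- split; [|split; [|split; [|split]]] => /=.
  + exact: HAA.
  + by move=> y Ay; left.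
  + by move=> a Aa; case: (xm (gA1 s a)).
  + by move=> y Ay; case: (xm (gA2 s y)).
  + move=> a y /(inv_gg Hs) [Gy Aa _ Ha _]; do 2!split => //; exact: ltnW.
- split => //; split; first by move=> a; exact: iff_refl.
  split; first by move=> y; exact: iff_refl.
  split; first by move=> a _ nA; exact: reply1_level1_new nA.
  move=> a; split; first by move=> [y [_ [Aa Ha]]].
  by move=> [Aa Ha]; have [y Gy] := reply1_dom Aa Ha; exists y.
Qed.

Lemma reply1_invariant : iso_invariant s'.
Proof.
have [Hb [HAA _]] := Hm.
split; first exact: reply1_state.
- move=> a /= Aa; case: (xm (gA1 s a)) => [A1a|A1a] /=.
  + case: (inv_level1 Hs A1a) => [[Pa Ha]|[nPa [r [Er Hr]]]]; first by left; split => //; apply: leq_trans Ha _.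
    right; split => //; rewrite Er in Hb; have [r' [-> Hr']] := olt_below_fin Hb.
    by exists r'; split => //; lia.
  + case: (xm (P1 a)) => [Pa|Pa] /=; first by left.
    by right; split => //; have [r' ->] := reply1_outside_fin Aa Pa; exists r'.
- move=> y /= Ay; case: (xm (gA2 s y)) => [A2y|A2y] /=.
  + case: (inv_level2 Hs A2y) => [[Py Hy]|[nPy [r [Er Hr]]]]; first by left; split => //; apply: leq_trans Hy _.
    right; split => //; rewrite Er in Hb; have [r' [-> Hr']] := olt_below_fin Hb.
    by exists r'; split => //; lia.
  + by left; case: Ay => // -[a [/(srb_sub HG) [_ Py] _]].
- move=> a y /=; split.
  + move=> [Gy [Aa Ha]]; split => //; first exact: HAA.
    * by right; exists a.
    * by case: (xm (gA1 s a)).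
    * exact: (reply1_level2 Gy).
  + move=> [Gy Aa _ Ha _]; case: (classic (gA1 s a)) => A1a; first by move: Ha; case: xm.
    by have /= := reply1_level1_new A1a; lia.
Qed.

End SideOneMove.
End IsoReply.

Lemma small_rel_bijection_flip (M1 M2 : tstruct) P1 P2 (G : carrier M1 -> carrier M2 -> Prop) :
  small_rel_bijection P1 P2 G -> small_rel_bijection P2 P1 (fun b a => G a b).
Proof.
case=> Hf Hi Hr Hd Hran Hsub L1 L2; split => //.
- by move=> b a a' H H'; exact: Hi H H'.
- by move=> b b' a H H'; exact: Hf H H'.
- by move=> n v1 v2 H; symmetry; exact: Hr.
- by move=> a b /Hsub [].
Qed.

Lemma iso_invariant_swap (M1 M2 : tstruct) P1 P2 (G : carrier M1 -> carrier M2 -> Prop) s :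
  iso_invariant P1 P2 G s -> iso_invariant P2 P1 (fun b a => G a b) (swap_state s).
Proof.
case=> Hs I1 I2 I3; split => //; first exact: is_state_swap.
by move=> b a /=; rewrite I3; split => -[].
Qed.

(* Sets played at ordinal [omega] must be matched at once: there is no bound on the later moves. *)
Definition covers (M1 M2 : tstruct) (P1 : carrier M1 -> Prop) (P2 : carrier M2 -> Prop)
    (m : move omega_succ M1 M2) : Prop :=
  match m with
  | mv1 (Some None) A => forall a, A a -> P1 a
  | mv2 (Some None) B => forall b, B b -> P2 b
  | _ => True
  end.

Lemma iso_reply_spec (M1 M2 : tstruct) P1 P2 (G : carrier M1 -> carrier M2 -> Prop) s m :
  small_rel_bijection P1 P2 G -> iso_invariant P1 P2 G s -> legal_move omega_succ_lt s m ->
  (gbeta s = None -> covers P1 P2 m) ->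
  legal_response s m (iso_reply P1 P2 G s m) /\ iso_invariant P1 P2 G (iso_reply P1 P2 G s m).
Proof.
move=> HG Hs; case: m => b A Hm Hcov.
- have Hfirst : gbeta s = None -> b = Some None -> forall a, A a -> P1 a.
    by move=> /Hcov + Eb; rewrite Eb.
  by split; [exact: reply1_legal | exact: reply1_invariant].
- have Hfirst : gbeta (swap_state s) = None -> b = Some None -> forall y, A y -> P2 y.
    by move=> /Hcov + Eb; rewrite Eb.
  have HG' := small_rel_bijection_flip HG; have Hs' := iso_invariant_swap Hs.
  have Hm' := legal_move_swap Hm.
  split; last exact: (iso_invariant_swap (reply1_invariant HG' Hs' Hm' Hfirst)).
  by have := legal_response_swap (reply1_legal HG' Hs' Hm'); rewrite swap_stateK.
Qed.

Definition rel_embedding_on (M1 M2 : tstruct) (A : carrier M1 -> Prop) (e : carrier M1 -> carrier M2) :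
    Prop :=
  (forall a a', A a -> A a' -> e a = e a' -> a = a') /\
  (forall n (v : 'I_n -> carrier M1), (forall i, A (v i)) -> (rel v <-> rel (e \o v))).

Definition small_embeds (M1 M2 : tstruct) : Prop :=
  forall A : carrier M1 -> Prop, le_aleph1 {a | A a} ->
    exists e : carrier M1 -> carrier M2, rel_embedding_on A e.

Lemma small_embeds_choice (M1 M2 : tstruct) : small_embeds M1 M2 ->
  exists E : (carrier M1 -> Prop) -> carrier M1 -> carrier M2,
    forall A, le_aleph1 {a | A a} -> rel_embedding_on A (E A).
Proof.
move=> HE; have [d2] := carrier_inh M2.
apply: (choice (fun A e => le_aleph1 {a | A a} -> rel_embedding_on A e)) => A.
case: (classic (le_aleph1 {a | A a})) => [/HE [e He]|H]; first by exists e.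
by exists (fun _ => d2).
Qed.

Lemma graph_small_rel_bijection (M1 M2 : tstruct) (A : carrier M1 -> Prop) (e : carrier M1 -> carrier M2) :
  le_aleph1 {a | A a} -> rel_embedding_on A e ->
  small_rel_bijection A (fun y => exists a, A a /\ y = e a) (fun a y => A a /\ y = e a).
Proof.
move=> HA [Ie Re]; split.
- by move=> a y y' [_ ->] [_ ->].
- by move=> a a' y [Ha ->] [Ha' E]; exact: Ie.
- move=> n v1 v2 H.
  have -> : v2 = e \o v1 by apply: functional_extensionality => j; exact: (proj2 (H j)).
  by apply: Re => j; exact: (proj1 (H j)).
- by move=> a Ha; exists (e a).
- by move=> y [a [Ha ->]]; exists a.
- by move=> a y [Ha ->]; split => //; exists a.
- exact: HA.
- exact: le_aleph1_image.
Qed.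

Lemma start_state_is_state (M1 M2 : tstruct) : small_embeds M1 M2 -> is_state (start_state omega_succ M1 M2).
Proof.
move=> HE; have [e [_ Re]] := HE _ (le_aleph1_empty (carrier M1)).
split; first exact: le_aleph1_empty.
split; first exact: le_aleph1_empty.
split; first by split.
split; first by move=> ? [].
split; first by move=> ? [].
split; last by split => ? [].
apply: preserves_qf_of_rel; first by split.
move=> [|n] v1 v2 H; last by case: (H ord0).
have -> : v2 = e \o v1 by apply: functional_extensionality => -[].
by apply: Re => -[].
Qed.

Section EmbeddingStrategy.
Variables (M1 M2 : tstruct) (E12 : (carrier M1 -> Prop) -> carrier M1 -> carrier M2)
          (E21 : (carrier M2 -> Prop) -> carrier M2 -> carrier M1).
Hypotheses (HE12 : forall A, le_aleph1 {a | A a} -> rel_embedding_on A (E12 A))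
           (HE21 : forall B, le_aleph1 {b | B b} -> rel_embedding_on B (E21 B)).
Hypothesis Hstart : is_state (start_state omega_succ M1 M2).

(* ISO's correspondence is fixed by AIS's first move: an embedding of the set played, if it was
   played at ordinal [omega], and the empty correspondence otherwise. *)
Definition omega_part (T : Type) (b : option omega_succ) (A : T -> Prop) (x : T) : Prop :=
  b = Some None /\ A x.

Definition corr1 (m : move omega_succ M1 M2) : carrier M1 -> Prop :=
  match m with
  | mv1 b A => omega_part b A
  | mv2 b B => fun a => exists y, omega_part b B y /\ a = E21 (omega_part b B) y
  end.

Definition corr2 (m : move omega_succ M1 M2) : carrier M2 -> Prop :=
  match m with
  | mv1 b A => fun y => exists a, omega_part b A a /\ y = E12 (omega_part b A) a
  | mv2 b B => omega_part b B
  end.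

Definition corr (m : move omega_succ M1 M2) : carrier M1 -> carrier M2 -> Prop :=
  match m with
  | mv1 b A => fun a y => omega_part b A a /\ y = E12 (omega_part b A) a
  | mv2 b B => fun a y => omega_part b B y /\ a = E21 (omega_part b B) y
  end.

Lemma corr_small_rel_bijection m : legal_move omega_succ_lt (start_state omega_succ M1 M2) m ->
  small_rel_bijection (corr1 m) (corr2 m) (corr m).
Proof.
case: m => b A [_ [_ HA]].
- have HA' : le_aleph1 {a | omega_part b A a} by apply: le_aleph1_subset HA => a [].
  exact: graph_small_rel_bijection HA' (HE12 HA').
- have HA' : le_aleph1 {a | omega_part b A a} by apply: le_aleph1_subset HA => a [].
  exact: small_rel_bijection_flip (graph_small_rel_bijection HA' (HE21 HA')).
Qed.

Lemma corr_covers m : covers (corr1 m) (corr2 m) m.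
Proof. by case: m => [[[?|]|] A|[[?|]|] B]. Qed.

Definition first_move (h : list (gstate omega_succ M1 M2 * move omega_succ M1 M2)) m :=
  if h is p :: _ then p.2 else m.

Definition emb_strategy : strategy omega_succ M1 M2 := fun h s m =>
  iso_reply (corr1 (first_move h m)) (corr2 (first_move h m)) (corr (first_move h m)) s m.

Definition emb_play_inv (h : list (gstate omega_succ M1 M2 * move omega_succ M1 M2)) s : Prop :=
  (h = [::] /\ s = start_state omega_succ M1 M2) \/
  exists m1 rest, [/\ h = (start_state omega_succ M1 M2, m1) :: rest,
    legal_move omega_succ_lt (start_state omega_succ M1 M2) m1,
    iso_invariant (corr1 m1) (corr2 m1) (corr m1) s & gbeta s <> None].

Lemma legal_response_beta (s s' : gstate omega_succ M1 M2) m : legal_move omega_succ_lt s m -> legal_response s m s' -> gbeta s' <> None.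
Proof. by case: m => b A [Hb _] [_ [_ [_ [-> _]]]]; case: b Hb. Qed.

Lemma emb_strategy_step h s m : emb_play_inv h s -> legal_move omega_succ_lt s m ->
  legal_response s m (emb_strategy h s m) /\ emb_play_inv (h ++ [:: (s, m)]) (emb_strategy h s m).
Proof.
case=> [[-> ->]|[m1 [rest [-> Lm1 HI Hb]]]] Lm.
- have HI : iso_invariant (corr1 m) (corr2 m) (corr m) (start_state omega_succ M1 M2).
    by split => //; try (by move=> ? []); move=> a y; split => -[].
  have [Hr HI'] := iso_reply_spec (corr_small_rel_bijection Lm) HI Lm (fun _ => corr_covers m).
  split => //; right; exists m, [::]; split => //; exact: legal_response_beta Lm Hr.
- have [Hr HI'] := iso_reply_spec (corr_small_rel_bijection Lm1) HI Lm (fun E => False_ind _ (Hb E)).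
  split => //; right; exists m1, (rest ++ [:: (s, m)]); split => //; exact: legal_response_beta Lm Hr.
Qed.

Lemma emb_strategy_wins : ISO_wins omega_succ_lt M1 M2.
Proof.
split => //; exists emb_strategy.
have Hreach h s : reachable omega_succ_lt emb_strategy h s -> emb_play_inv h s.
  elim => [|h0 s0 m0 _ IH L0]; first by left.
  exact: (proj2 (emb_strategy_step IH L0)).
by move=> h s m /Hreach HI Lm; exact: (proj1 (emb_strategy_step HI Lm)).
Qed.

End EmbeddingStrategy.

Lemma E0_of_small_embeds (M1 M2 : tstruct) :
  small_embeds M1 M2 -> small_embeds M2 M1 -> E0 omega_succ_lt M1 M2.
Proof.
move=> H12 H21; have [E12 HE12] := small_embeds_choice H12; have [E21 HE21] := small_embeds_choice H21.
exact: emb_strategy_wins HE12 HE21 (start_state_is_state H12).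
Qed.

Lemma E1_hom_free (M N : tstruct) : E1 omega_succ_lt M N -> (hom_free M <-> hom_free N).
Proof.
have E0_imp (M1 M2 : tstruct) : E0 omega_succ_lt M1 M2 -> hom_free M2 -> hom_free M1.
  by move=> H HK [X /(E0_homogeneous H) HY]; apply: HK.
elim => {M N} [M N H|M|M N _ IH|M N P _ IH1 _ IH2].
- by split; apply: E0_imp => //; exact: E0_sym.
- done.
- by rewrite IH.
- by rewrite IH1 IH2.
Qed.

(* A structure of size at most [aleph_1], coded on a subset of [Omega]: its domain and its relations. *)
Definition code := ((Omega -> Prop) * (forall n, ('I_n -> Omega) -> Prop))%type.

Definition realizes (M : tstruct) (c : code) : Prop :=
  exists f : Omega -> carrier M, (forall x y, c.1 x -> c.1 y -> f x = f y -> x = y) /\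
    (forall n (v : 'I_n -> Omega), (forall i, c.1 (v i)) -> (c.2 n v <-> rel (f \o v))).

Lemma small_embeds_of_realizes (M1 M2 : tstruct) :
  (forall c, realizes M1 c -> realizes M2 c) -> small_embeds M1 M2.
Proof.
move=> HS A HA; have [d1] := carrier_inh M1; have [io Hio] := le_aleph1_Omega HA.
pose io' (a : carrier M1) : Omega := if xm (A a) is left H then io (exist _ a H) else fun _ _ => False.
have Hio' a a' : A a -> A a' -> io' a = io' a' -> a = a'.
  by move=> Ha Ha'; rewrite /io'; case: (xm (A a)) => // H; case: (xm (A a')) => // H' /Hio [].
pose c : code := (fun x => exists a, A a /\ x = io' a,
                  fun n v => exists u : 'I_n -> carrier M1, [/\ forall i, A (u i), forall i, v i = io' (u i) & rel u]).
have HR n (v : 'I_n -> carrier M1) : (forall i, A (v i)) -> (c.2 n (io' \o v) <-> rel v).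
  move=> Hv /=; split; last by move=> H; exists v.
  move=> [u [Hu Huv HRu]].
  by have -> : v = u by apply: functional_extensionality => i; apply: Hio' => //; exact: Huv.
have [f2 [If2 Rf2]] : realizes M2 c.
  apply: HS.
  have /choice [pre Hpre] : forall x, exists a, c.1 x -> A a /\ x = io' a.
    by move=> x; case: (classic (c.1 x)) => [[a [Ha E]]|H]; [exists a | exists d1].
  exists pre; split.
  - by move=> x y /Hpre [_ Ex] /Hpre [_ Ey] E; rewrite Ex Ey E.
  - move=> n v Hv.
    have Ev : v = io' \o (pre \o v) by apply: functional_extensionality => i /=; exact: (proj2 (Hpre _ (Hv i))).
    by rewrite {1}Ev HR //; move=> i; exact: (proj1 (Hpre _ (Hv i))).
exists (f2 \o io'); split.
- by move=> a a' Ha Ha' /= E; apply: Hio' => //; apply: If2 => //; [exists a | exists a'].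
- by move=> n v Hv; rewrite -(HR n v Hv); apply: (Rf2 n (io' \o v)) => i; exists (v i).
Qed.

Definition empty_nat_structure : tstruct :=
  @Structure tau1 nat (inhabits 0) (fun _ _ => False) (fun f => match proj1_sig f with end).

Lemma hom_free_empty_nat_structure : hom_free empty_nat_structure.
Proof. by move=> [X [[_ HX] _]]; apply: HX; exists (fun x => proj1_sig x) => x y /sig_eq. Qed.

(* The disjuncts of the sentence: one hom-free structure realizing exactly the codes in [p],
   when there is one (a dummy member of the class otherwise). *)
Definition model_of (p : code -> Prop) : tstruct :=
  if xm (exists M : tstruct, hom_free M /\ realizes M = p) is left H then proj1_sig (cid H)
  else empty_nat_structure.

Lemma hom_free_model_of p : hom_free (model_of p).
Proof.
rewrite /model_of; case: (xm _) => [H|_]; last exact: hom_free_empty_nat_structure.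
exact: (proj1 (proj2_sig (cid H))).
Qed.

Lemma E1_model_of (M : tstruct) : hom_free M -> E1 omega_succ_lt M (model_of (realizes M)).
Proof.
move=> HK; rewrite /model_of; case: (xm _) => [H|H]; last by case: H; exists M.
have [_ E] := proj2_sig (cid H).
apply: Relation_Operators.rst_step; apply: E0_of_small_embeds; apply: small_embeds_of_realizes => c;
  by rewrite E.
Qed.

Definition code_points := (Omega + {n : nat & 'I_n -> Omega})%type.
Definition code_coords := ((nat * nat) + (nat + nat * nat * nat))%type.

Lemma injects_code_points : injects code_points (code_coords -> Prop).
Proof.
exists (fun y => match y with
  | inl w => fun z : code_coords => if z is inl (a, b) then w a b else False
  | inr (existT n v) => fun z : code_coords => match z with
      | inl _ => False
      | inr (inl k) => k = n
      | inr (inr (i, a, b)) => exists j : 'I_n, nat_of_ord j = i /\ v j a b end end).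
have pointwise (P Q : code_coords -> Prop) z : P = Q -> P z -> Q z by move=> ->.
move=> [w|[n v]] [w'|[n' v']] E.
- congr inl; apply: functional_extensionality => a; apply: functional_extensionality => b.
  apply: propositional_extensionality.
  by split; [apply: (pointwise _ _ (inl (a, b)) E) | apply: (pointwise _ _ (inl (a, b)) (esym E))].
- by have := pointwise _ _ (inr (inl n')) (esym E) erefl.
- by have := pointwise _ _ (inr (inl n)) E erefl.
- have En : n = n' by apply: (pointwise _ _ (inr (inl n)) E).
  subst n'; have Ev i a b : v i a b <-> v' i a b.
    split => H; [have := pointwise _ _ (inr (inr (nat_of_ord i, a, b))) E |
                 have := pointwise _ _ (inr (inr (nat_of_ord i, a, b))) (esym E)];
      by case=> [|j [/val_inj -> //]]; exists i.
  congr (inr (existT _ n _)); apply: functional_extensionality => i.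
  apply: functional_extensionality => a; apply: functional_extensionality => b.
  exact/propositional_extensionality/Ev.
Qed.

Lemma injects_code : injects code (code_points -> Prop).
Proof.
exists (fun c : code => fun y : code_points => match y with inl w => c.1 w | inr (existT n v) => c.2 n v end).
move=> [D R] [D' R'] E.
have -> : D = D' by apply: functional_extensionality => w; exact: (f_equal (fun P => P (inl w)) E).
have -> : R = R' by apply: functional_extensionality_dep => n; apply: functional_extensionality => v;
  exact: (f_equal (fun P => P (inr (existT _ n v))) E).
done.
Qed.

(* There are at most [beth_2(aleph_1)] sets of codes, as [omega + 1] admits two power-set steps. *)
Lemma code_sets_small : le_beth_succ_alpha omega_succ_lt (code -> Prop).
Proof.
exists code; split; last exact: injects_refl.
apply: (@leBeth_pow _ omega_succ_lt None (Some None) code code_points) => //; last exact: injects_code.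
apply: (@leBeth_pow _ omega_succ_lt (Some None) (Some (Some 0)) code_points code_coords) => //.
- by apply/leBeth_base/countable_le_aleph1/countable_countType.
- exact: injects_code_points.
Qed.

Lemma tau1_small : le_aleph1 ({r : rsym tau | True} + {f : Defs.fsym tau | True}).
Proof.
apply: countable_le_aleph1; exists (fun x => match x with inl r => proj1_sig r | inr f => Empty_set_rect (fun _ => nat) (proj1_sig f) end).
by move=> [[r []]|[[] _]] [[r' []]|[[] _]] //= ->.
Qed.

Definition psi : L1_sentence tau :=
  @L1Sentence tau (fun _ => True) (fun _ => True) tau1_small omega_succ omega_succ_lt omega_succ_wo
    (countable_le_aleph1 (countable_countType _)) (code -> Prop) code_sets_small model_of.

Theorem claim4p8 :
  exists (tau : vocab) (psi : L1_sentence tau),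
    forall L : Type, infinite_type L ->
      ((exists M : structure tau, equipotent (carrier M) L /\ L1_sat M psi)
       <-> ~ arrows_aleph1_fin L).
Proof.
exists tau, psi => L HL.
have HLinh : inhabited L.
  apply: NNPP => H; apply: (HL 0); exists (fun x => False_rect _ (H (inhabits x))) => x.
  by case: (H (inhabits x)).
split.
- move=> [M [Heq [p Hp]]]; apply: (@hom_free_not_arrows (res M) L Heq).
  exact/(E1_hom_free Hp)/hom_free_model_of.
- move=> /(not_arrows_hom_free HLinh) [M [Heq HK]].
  by exists M; split => //; exists (realizes (res M)); exact: E1_model_of.
Qed.
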